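(* Let $\mathbb{C}$ be a regular category, $I$ a set, $\mathcal{J}=(I_j)_{j\in J}$ a family of subsets of $I$, and $(A_i)_{i\in I}$ a family of objects of $\mathbb{C}$ such that all products below exist. The following are equivalent: (i) $\prod_{i\in I}A_i$ has $\mathcal{J}$-fold subobject decompositions. (ii) For any monomorphism $s:S\to\prod_{i\in I}A_i$, the square with top arrow $(e_{I_j})_{j\in J}:S\to\prod_{j\in J}S_{I_j}$, left arrow $s$, right arrow $\prod_{j\in J}s_{I_j}:\prod_{j\in J}S_{I_j}\to\prod_{j\in J}\prod_{k\in I_j}A_k$ and bottom arrow $(\pi_{I_j})_{j\in J}:\prod_{i\in I}A_i\to\prod_{j\in J}\prod_{k\in I_j}A_k$ is a pullback, where $S\xrightarrow{e_{I_j}}S_{I_j}\xrightarrow{s_{I_j}}\prod_{k\in I_j}A_k$ is a regular epi–mono factorization of $\pi_{I_j}s$.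
   Context: A category is regular if it has finite limits and coequalizers of kernel pairs and regular epimorphisms are pullback-stable; every morphism factors as a regular epimorphism followed by a monomorphism, and the image of a subobject $S$ (represented by $s$) under a morphism $f$ is the subobject represented by the mono part of such a factorization of $fs$. For $K\subseteq I$, $\pi_K:\prod_{i\in I}A_i\to\prod_{k\in K}A_k$ is the canonical projection and the $K$-image $S_K$ of a subobject $S$ of $\prod_{i\in I}A_i$ is its image under $\pi_K$. The product $\prod_{i\in I}A_i$ has $\mathcal{J}$-fold subobject decompositions if for any two subobjects $S,T$ of $\prod_{i\in I}A_i$ with $S_{I_j}=T_{I_j}$ for all $j\in J$, we have $S=T$. *)

Set Implicit Arguments.
Unset Strict Implicit.

Record Category := {
  ob :> Type;
  hom : ob -> ob -> Type;
  comp : forall {X Y Z : ob}, hom Y Z -> hom X Y -> hom X Z;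
  idm : forall X : ob, hom X X;
  comp_assoc : forall X Y Z W (h : hom Z W) (g : hom Y Z) (f : hom X Y),
      comp h (comp g f) = comp (comp h g) f;
  comp_id_l : forall X Y (f : hom X Y), comp (idm Y) f = f;
  comp_id_r : forall X Y (f : hom X Y), comp f (idm X) = f
}.

Arguments hom {C} : rename.
Arguments comp {C X Y Z} : rename.
Arguments idm {C} : rename.
Notation "g \o f" := (comp g f) (at level 40, left associativity).

Section Defs.
Variable C : Category.

Definition mono {X Y : C} (f : hom X Y) : Prop :=
  forall Z (g h : hom Z X), f \o g = f \o h -> g = h.

Definition is_pullback {P A B D : C} (pa : hom P A) (pb : hom P B)
  (f : hom A D) (g : hom B D) : Prop :=
  f \o pa = g \o pb /\
  forall (Z : C) (za : hom Z A) (zb : hom Z B), f \o za = g \o zb ->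
    exists u : hom Z P, (pa \o u = za /\ pb \o u = zb) /\
      forall v : hom Z P, pa \o v = za -> pb \o v = zb -> v = u.

Definition is_coequalizer {K X Q : C} (k1 k2 : hom K X) (q : hom X Q) : Prop :=
  q \o k1 = q \o k2 /\
  forall (Z : C) (z : hom X Z), z \o k1 = z \o k2 ->
    exists u : hom Q Z, u \o q = z /\ forall v : hom Q Z, v \o q = z -> v = u.

Definition regular_epi {X Q : C} (q : hom X Q) : Prop :=
  exists (K : C) (k1 k2 : hom K X), is_coequalizer k1 k2 q.

Definition is_terminal (T : C) : Prop :=
  forall X : C, exists f : hom X T, forall g : hom X T, g = f.

Definition is_regular : Prop :=
  (exists T : C, is_terminal T) /\
  (forall (A B D : C) (f : hom A D) (g : hom B D),
      exists (P : C) (pa : hom P A) (pb : hom P B), is_pullback pa pb f g) /\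
  (forall (X Y K : C) (f : hom X Y) (k1 k2 : hom K X), is_pullback k1 k2 f f ->
      exists (Q : C) (q : hom X Q), is_coequalizer k1 k2 q) /\
  (forall (P A B D : C) (pa : hom P A) (pb : hom P B) (f : hom A D) (g : hom B D),
      is_pullback pa pb f g -> regular_epi f -> regular_epi pb).

Definition is_product (I : Type) (A : I -> C) (P : C) (p : forall i, hom P (A i)) : Prop :=
  forall (Z : C) (f : forall i, hom Z (A i)),
    exists u : hom Z P, (forall i, p i \o u = f i) /\
      forall v : hom Z P, (forall i, p i \o v = f i) -> v = u.

Definition same_subobject {S T X : C} (s : hom S X) (t : hom T X) : Prop :=
  (exists u : hom S T, t \o u = s) /\ (exists v : hom T S, s \o v = t).

Definition is_image {S X Y M : C} (f : hom X Y) (s : hom S X) (m : hom M Y) : Prop :=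
  exists e : hom S M, regular_epi e /\ mono m /\ m \o e = f \o s.

End Defs.
Arguments is_product {C} I A P p.

(** The square of (ii) always commutes and its right edge is mono, so it is a
    pullback exactly when the subobject [s] is as large as the pullback [t] of
    the right edge along the bottom one.  Now [s <= t], and the [I_j]-image of
    [t] is squeezed between that of [s] (monotonicity of images) and [S_{I_j}]
    (because [t] factors through [prod_j S_{I_j}]), so [s] and [t] have the
    same [I_j]-images: (i) forces [s = t].  Conversely, if [t] has
    [I_j]-images contained in those of [s], then [t] factors through each
    [s_{I_j}], hence through [prod_j S_{I_j}], hence through the pullback [s];
    applying this in both directions gives (i). *)

From Stdlib Require Import IndefiniteDescription ChoiceFacts.

Section RegularCategory.
Context {C : Category}.

Definition epi {X Y : C} (f : hom X Y) : Prop :=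
  forall Z (g h : hom Y Z), g \o f = h \o f -> g = h.

Definition subobject_le {S T X : C} (s : hom S X) (t : hom T X) : Prop :=
  exists u : hom S T, t \o u = s.

Definition is_reg_factorization {X M Y : C} (e : hom X M) (m : hom M Y) (g : hom X Y) : Prop :=
  regular_epi e /\ mono m /\ m \o e = g.

Lemma regular_epi_epi {X M : C} (e : hom X M) : regular_epi e -> epi e.
Proof.
  intros [K [k1 [k2 [Hk Hcoeq]]]] Z g h Hgh.
  assert (Hk' : (g \o e) \o k1 = (g \o e) \o k2)
    by (rewrite <- !comp_assoc, Hk; reflexivity).
  destruct (Hcoeq Z (g \o e) Hk') as [w [_ Hw]].
  rewrite (Hw g eq_refl), (Hw h (eq_sym Hgh)); reflexivity.
Qed.

Lemma epi_comp {X Y Z : C} (f : hom X Y) (g : hom Y Z) : epi f -> epi g -> epi (g \o f).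
Proof.
  intros Hf Hg W u v Huv. apply Hg, Hf. rewrite <- !comp_assoc. exact Huv.
Qed.

Lemma subobject_le_trans {R S T X : C} (r : hom R X) (s : hom S X) (t : hom T X) :
  subobject_le r s -> subobject_le s t -> subobject_le r t.
Proof.
  intros [u Hu] [v Hv]. exists (v \o u). rewrite comp_assoc, Hv. exact Hu.
Qed.

Lemma product_hom_ext {I : Type} {A : I -> C} {P : C} {p : forall i, hom P (A i)} :
  is_product I A P p ->
  forall Z (g h : hom Z P), (forall i, p i \o g = p i \o h) -> g = h.
Proof.
  intros HP Z g h Hgh. destruct (HP Z (fun i => p i \o h)) as [w [_ Hw]].
  rewrite (Hw g Hgh), (Hw h (fun i => eq_refl)); reflexivity.
Qed.

Lemma product_map_mono {J : Type} {SI Y : J -> C} {PS Q : C}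
  (r : forall j, hom PS (SI j)) (q : forall j, hom Q (Y j))
  (m : forall j, hom (SI j) (Y j)) (g : hom PS Q) :
  is_product J SI PS r -> (forall j, mono (m j)) ->
  (forall j, q j \o g = m j \o r j) -> mono g.
Proof.
  intros Hr Hm Hg Z u v Huv. apply (product_hom_ext Hr). intros j. apply Hm.
  rewrite !comp_assoc, <- Hg, <- !comp_assoc, Huv. reflexivity.
Qed.

Lemma pullback_mono {P A B D : C} {pa : hom P A} {pb : hom P B}
  {f : hom A D} {g : hom B D} :
  is_pullback pa pb f g -> mono g -> mono pa.
Proof.
  intros [Hsq Hpb] Hg Z u v Huv.
  assert (Hpbuv : pb \o u = pb \o v).
  { apply Hg. rewrite !comp_assoc, <- Hsq, <- !comp_assoc, Huv. reflexivity. }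
  destruct (Hpb Z (pa \o v) (pb \o v)) as [w [_ Hw]].
  { rewrite !comp_assoc, Hsq. reflexivity. }
  rewrite (Hw u Huv Hpbuv), (Hw v eq_refl eq_refl). reflexivity.
Qed.

Lemma is_pullback_of_mono_factor {P S A B D : C} {pa : hom P A} {pb : hom P B}
  {f : hom A D} {g : hom B D} (s : hom S A) (top : hom S B) (v : hom P S) :
  is_pullback pa pb f g -> mono s -> f \o s = g \o top ->
  s \o v = pa -> top \o v = pb -> is_pullback s top f g.
Proof.
  intros [_ Hpb] Hs Hsq Hv Htv. split; [exact Hsq|].
  intros Z za zb Hz. destruct (Hpb Z za zb Hz) as [u [[Hu1 Hu2] _]].
  exists (v \o u). split; [split|].
  - rewrite comp_assoc, Hv. exact Hu1.
  - rewrite comp_assoc, Htv. exact Hu2.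
  - intros w Hw _. apply Hs. rewrite Hw, comp_assoc, Hv. symmetry. exact Hu1.
Qed.

Lemma regular_epi_mono_lift {X M A B : C} (e : hom X M) (m : hom A B)
  (u : hom X A) (v : hom M B) :
  regular_epi e -> mono m -> m \o u = v \o e -> exists d : hom M A, m \o d = v.
Proof.
  intros He Hm Hsq. pose proof He as [K [k1 [k2 [Hk Hcoeq]]]].
  assert (Hu : u \o k1 = u \o k2).
  { apply Hm. rewrite !comp_assoc, Hsq, <- !comp_assoc, Hk. reflexivity. }
  destruct (Hcoeq _ u Hu) as [d [Hd _]]. exists d.
  apply (regular_epi_epi e He). rewrite <- comp_assoc, Hd. exact Hsq.
Qed.

Lemma image_least {S X Y M N : C} (f : hom X Y) (s : hom S X) (ms : hom M Y)
  (n : hom N Y) (g : hom S N) :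
  is_image f s ms -> mono n -> n \o g = f \o s -> subobject_le ms n.
Proof.
  intros [e [He [_ Hms]]] Hn Hg.
  apply (regular_epi_mono_lift e n g ms He Hn). rewrite Hg, Hms. reflexivity.
Qed.

Lemma same_image_of_subobject_le {S T X Y M MS MT : C} (g : hom X Y)
  (s : hom S X) (t : hom T X) (n : hom M Y) (h : hom T M)
  (ms : hom MS Y) (mt : hom MT Y) :
  subobject_le s t -> is_image g s n -> n \o h = g \o t ->
  is_image g s ms -> is_image g t mt -> same_subobject ms mt.
Proof.
  intros [u Hu] Hn Hh Hms Hmt.
  pose proof Hn as [_ [_ [Hn_mono _]]].
  pose proof Hms as [es [_ [Hms_mono Hes]]].
  pose proof Hmt as [et [_ [Hmt_mono Het]]].
  split.
  - apply (image_least g s ms mt (et \o u) Hms Hmt_mono).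
    rewrite comp_assoc, Het, <- comp_assoc, Hu. reflexivity.
  - apply (subobject_le_trans mt n ms (image_least g t mt n h Hmt Hn_mono Hh)).
    exact (image_least g s n ms es Hn Hms_mono Hes).
Qed.

Variable HC : is_regular C.

(* [w] is a composite of two pullbacks of [q], hence epi by pullback-stability. *)
Lemma regular_epi_cover_pair {X Z M : C} (q : hom X M) : regular_epi q ->
  forall x y : hom Z M, exists (W : C) (w : hom W Z) (a c : hom W X),
    epi w /\ q \o a = x \o w /\ q \o c = y \o w.
Proof.
  pose proof HC as [_ [Hpb [_ Hstab]]]. intros Hq x y.
  destruct (Hpb _ _ _ q x) as [W1 [a1 [w1 H1]]].
  destruct (Hpb _ _ _ q (y \o w1)) as [W2 [c [w2 H2]]].
  exists W2, (w1 \o w2), (a1 \o w2), c. split; [|split].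
  - apply epi_comp; apply regular_epi_epi; eapply Hstab; eassumption.
  - rewrite comp_assoc, (proj1 H1). symmetry. apply comp_assoc.
  - rewrite (proj1 H2). symmetry. apply comp_assoc.
Qed.

Lemma coequalizer_kernel_pair_mono {X Y R M : C} (f : hom X Y) (k1 k2 : hom R X)
  (q : hom X M) (m : hom M Y) :
  is_pullback k1 k2 f f -> is_coequalizer k1 k2 q -> m \o q = f -> mono m.
Proof.
  pose proof HC as [_ [Hpb _]]. intros HR Hq Hm.
  destruct (Hpb _ _ _ m m) as [K [g1 [g2 HK]]].
  assert (Hg : g1 = g2).
  { assert (Hq_reg : regular_epi q) by (exists R, k1, k2; exact Hq).
    destruct (regular_epi_cover_pair q Hq_reg g1 g2) as [W [w [a [c [Hw [Ha Hc]]]]]].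
    apply Hw. rewrite <- Ha, <- Hc.
    destruct (proj2 HR W a c) as [h [[Hh1 Hh2] _]].
    { rewrite <- Hm, <- !comp_assoc, Ha, Hc, !comp_assoc, (proj1 HK). reflexivity. }
    rewrite <- Hh1, <- Hh2, !comp_assoc, (proj1 Hq). reflexivity. }
  intros Z u v Huv. destruct (proj2 HK Z u v Huv) as [h [[H1 H2] _]].
  rewrite <- H1, <- H2, Hg. reflexivity.
Qed.

Lemma regular_factorization {X Y : C} (f : hom X Y) :
  exists (M : C) (e : hom X M) (m : hom M Y), is_reg_factorization e m f.
Proof.
  pose proof HC as [_ [Hpb [Hcoeq _]]].
  destruct (Hpb _ _ _ f f) as [R [k1 [k2 HR]]].
  destruct (Hcoeq _ _ _ f k1 k2 HR) as [M [q Hq]].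
  destruct (proj2 Hq Y f (proj1 HR)) as [m [Hm _]].
  exists M, q, m. split; [exists R, k1, k2; exact Hq|].
  split; [exact (coequalizer_kernel_pair_mono f k1 k2 q m HR Hq Hm) | exact Hm].
Qed.

Lemma regular_factorization_family {X : C} {J : Type} {Y : J -> C}
  (g : forall j, hom X (Y j)) :
  exists (M : J -> C) (e : forall j, hom X (M j)) (m : forall j, hom (M j) (Y j)),
    forall j, is_reg_factorization (e j) (m j) (g j).
Proof.
  assert (Hfact : forall j, exists F : {M : C & (hom X M * hom M (Y j))%type},
             is_reg_factorization (fst (projT2 F)) (snd (projT2 F)) (g j)).
  { intros j. destruct (regular_factorization (g j)) as [M [e [m Hem]]].
    exists (existT _ M (e, m)). exact Hem. }
  destruct (non_dep_dep_functional_choice functional_choice _ _ Hfact) as [F HF].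
  exists (fun j => projT1 (F j)), (fun j => fst (projT2 (F j))),
    (fun j => snd (projT2 (F j))).
  exact HF.
Qed.

Section Decompositions.
Context {X : C} {J : Type} {Y : J -> C} {f : forall j, hom X (Y j)}
  {Q : C} {q : forall j, hom Q (Y j)} {b : hom X Q}.
Hypothesis HQ : is_product J Y Q q.
Hypothesis Hb : forall j, q j \o b = f j.

Definition has_subobject_decompositions : Prop :=
  forall (S T : C) (s : hom S X) (t : hom T X), mono s -> mono t ->
    (forall j (MS MT : C) (ms : hom MS (Y j)) (mt : hom MT (Y j)),
        is_image (f j) s ms -> is_image (f j) t mt -> same_subobject ms mt) ->
    same_subobject s t.

Definition image_squares_are_pullbacks : Prop :=
  forall (S : C) (s : hom S X), mono s ->
  forall (SI : J -> C) (e : forall j, hom S (SI j)) (m : forall j, hom (SI j) (Y j)),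
    (forall j, is_reg_factorization (e j) (m j) (f j \o s)) ->
  forall (PS : C) (r : forall j, hom PS (SI j)), is_product J SI PS r ->
  forall (top : hom S PS) (right : hom PS Q),
    (forall j, r j \o top = e j) -> (forall j, q j \o right = m j \o r j) ->
    is_pullback s top b right.

Lemma image_squares_are_pullbacks_of_decompositions :
  has_subobject_decompositions -> image_squares_are_pullbacks.
Proof.
  pose proof HC as [_ [Hpb _]].
  intros Hdec S s Hs SI e m Hem PS r Hr top right Htop Hright.
  assert (Hsq : b \o s = right \o top).
  { apply (product_hom_ext HQ). intros j.
    rewrite !comp_assoc, Hb, Hright, <- comp_assoc, Htop.
    symmetry. exact (proj2 (proj2 (Hem j))). }
  assert (Hright_mono : mono right)
    by exact (product_map_mono r q m right Hr (fun j => proj1 (proj2 (Hem j))) Hright).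
  destruct (Hpb _ _ _ b right) as [T [t [t' HT]]].
  destruct (proj2 HT S s top Hsq) as [u [[Hu _] _]].
  assert (Himages : forall j (MS MT : C) (ms : hom MS (Y j)) (mt : hom MT (Y j)),
             is_image (f j) s ms -> is_image (f j) t mt -> same_subobject ms mt).
  { intros j MS MT ms mt.
    apply (same_image_of_subobject_le (f j) s t (m j) (r j \o t')).
    - exists u. exact Hu.
    - exists (e j). exact (Hem j).
    - rewrite comp_assoc, <- Hright, <- comp_assoc, <- (proj1 HT), comp_assoc, Hb.
      reflexivity. }
  destruct (Hdec S T s t Hs (pullback_mono HT Hright_mono) Himages) as [_ [v Hv]].
  apply (is_pullback_of_mono_factor s top v HT Hs Hsq Hv).
  apply Hright_mono. rewrite comp_assoc, <- Hsq, <- comp_assoc, Hv. exact (proj1 HT).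
Qed.

Section ConverseDirection.
Hypothesis Hsquares : image_squares_are_pullbacks.
Hypothesis Himage_products : forall (S : C) (s : hom S X), mono s ->
  forall (SI : J -> C) (e : forall j, hom S (SI j)) (m : forall j, hom (SI j) (Y j)),
    (forall j, is_reg_factorization (e j) (m j) (f j \o s)) ->
    exists (PS : C) (r : forall j, hom PS (SI j)), is_product J SI PS r.

Lemma subobject_le_of_images_le {S T : C} (s : hom S X) (t : hom T X) : mono s ->
  (forall j (MS MT : C) (ms : hom MS (Y j)) (mt : hom MT (Y j)),
      is_image (f j) s ms -> is_image (f j) t mt -> subobject_le mt ms) ->
  subobject_le t s.
Proof.
  intros Hs Himg.
  destruct (regular_factorization_family (fun j => f j \o s)) as [SI [e [m Hem]]].
  destruct (regular_factorization_family (fun j => f j \o t)) as [MT [et [mt Hemt]]].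
  destruct (Himage_products S s Hs SI e m Hem) as [PS [r Hr]].
  destruct (Hr S e) as [top [Htop _]].
  destruct (HQ PS (fun j => m j \o r j)) as [right [Hright _]].
  assert (Hlift : forall j, exists g : hom T (SI j), m j \o g = f j \o t).
  { intros j. destruct (Himg j (SI j) (MT j) (m j) (mt j)) as [v Hv].
    - exists (e j). exact (Hem j).
    - exists (et j). exact (Hemt j).
    - exists (v \o et j). rewrite comp_assoc, Hv. exact (proj2 (proj2 (Hemt j))). }
  destruct (non_dep_dep_functional_choice functional_choice _ _ Hlift) as [g Hg].
  destruct (Hr T g) as [zb [Hzb _]].
  destruct (proj2 (Hsquares S s Hs SI e m Hem PS r Hr top right Htop Hright) T t zb)
    as [u [[Hu _] _]].
  - apply (product_hom_ext HQ). intros j.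
    rewrite !comp_assoc, Hb, Hright, <- comp_assoc, Hzb, Hg. reflexivity.
  - exists u. exact Hu.
Qed.

Lemma decompositions_of_image_squares : has_subobject_decompositions.
Proof.
  intros S T s t Hs Ht Himg. split.
  - apply (subobject_le_of_images_le t s Ht).
    intros j MT MS mt ms Hmt Hms. exact (proj1 (Himg j MS MT ms mt Hms Hmt)).
  - apply (subobject_le_of_images_le s t Hs).
    intros j MS MT ms mt Hms Hmt. exact (proj2 (Himg j MS MT ms mt Hms Hmt)).
Qed.

End ConverseDirection.
End Decompositions.
End RegularCategory.

Theorem proposition4p3
  (C : Category) (HC : is_regular C)
  (I J : Type) (Ij : J -> I -> Prop) (A : I -> C)
  (* product of (A_i)_{i in I} *)
  (PI : C) (pI : forall i, hom PI (A i)) (HPI : is_product I A PI pI)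
  (* products of (A_k)_{k in I_j} *)
  (PK : J -> C) (pK : forall j (k : {i : I | Ij j i}), hom (PK j) (A (proj1_sig k)))
  (HPK : forall j, is_product {i : I | Ij j i} (fun k : {i : I | Ij j i} => A (proj1_sig k)) (PK j) (pK j))
  (* canonical projections pi_{I_j} *)
  (pi : forall j, hom PI (PK j))
  (Hpi : forall j (k : {i : I | Ij j i}), pK j k \o pi j = pI (proj1_sig k))
  (* product over J of the products over I_j *)
  (Q : C) (q : forall j, hom Q (PK j)) (HQ : is_product J PK Q q)
  (* bottom arrow (pi_{I_j})_{j in J} *)
  (b : hom PI Q) (Hb : forall j, q j \o b = pi j)
  (* the products prod_{j in J} S_{I_j} exist *)
  (HSprod : forall (S : C) (s : hom S PI), mono s ->
      forall (SI : J -> C) (e : forall j, hom S (SI j)) (m : forall j, hom (SI j) (PK j)),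
      (forall j, regular_epi (e j) /\ mono (m j) /\ m j \o e j = pi j \o s) ->
      exists (PS : C) (r : forall j, hom PS (SI j)), is_product J SI PS r) :
  (* (i) J-fold subobject decompositions *)
  (forall (S T : C) (s : hom S PI) (t : hom T PI), mono s -> mono t ->
      (forall j (MS MT : C) (ms : hom MS (PK j)) (mt : hom MT (PK j)),
          is_image (pi j) s ms -> is_image (pi j) t mt -> same_subobject ms mt) ->
      same_subobject s t)
  <->
  (* (ii) the square is a pullback *)
  (forall (S : C) (s : hom S PI), mono s ->
      forall (SI : J -> C) (e : forall j, hom S (SI j)) (m : forall j, hom (SI j) (PK j)),
      (forall j, regular_epi (e j) /\ mono (m j) /\ m j \o e j = pi j \o s) ->
      forall (PS : C) (r : forall j, hom PS (SI j)), is_product J SI PS r ->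
      forall (top : hom S PS) (right : hom PS Q),
      (forall j, r j \o top = e j) ->
      (forall j, q j \o right = m j \o r j) ->
      is_pullback s top b right).
Proof.
  split.
  - exact (image_squares_are_pullbacks_of_decompositions HC HQ Hb).
  - intros Hsquares. exact (decompositions_of_image_squares HC HQ Hb Hsquares HSprod).
Qed.
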